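(* Let $k,r,h$ be positive integers with $r\mid(k+h)$, and let $k'\le k$ be the largest integer divisible by $r$. If there exists a maximally recoverable local $(k,r,h)$-code over a finite field $\mathbb{F}$, then there exists a maximally recoverable data-local $(k',r,h)$-code over the same field $\mathbb{F}$.
   Context: Local codes: for positive integers $k,r,h$ with $r\mid(k+h)$, a local $(k,r,h)$-code over $\mathbb{F}$ is a linear systematic code of dimension $k$ and length $n=k+h+\frac{k+h}{r}$ consisting of $k$ data symbols, $h$ heavy parity symbols (each a fixed $\mathbb{F}$-linear combination of all data symbols), and, after partitioning the $k+h$ data and heavy parity symbols into $\frac{k+h}{r}$ groups of size $r$, one local parity per group equal to the sum (XOR in characteristic $2$) of the $r$ symbols of that group. A local group is such a group of $r$ symbols together with its local parity. A local $(k,r,h)$-code is maximally recoverable if for every set $E$ of coordinates obtained by picking exactly one coordinate from each of the $\frac{k+h}{r}$ local groups, puncturing the code in $E$ (deleting those coordinates) yields a maximum distance separable $[k+h,k]$ code (length $k+h$, dimension $k$, minimum distance $h+1$). Data-local codes: for positive integers $k',r,h$ with $r\mid k'$, a data-local $(k',r,h)$-code over $\mathbb{F}$ is a linear systematic code of dimension $k'$ and length $k'+\frac{k'}{r}+h$ consisting of $k'$ data symbols partitioned into $\frac{k'}{r}$ groups of size $r$, one local parity per group equal to the sum of the $r$ data symbols of the group, and $h$ heavy parity symbols each a fixed $\mathbb{F}$-linear combination of all data symbols. A local group is $r$ data symbols together with their local parity. A data-local $(k',r,h)$-code is maximally recoverable if for every set $E$ obtained by picking exactly one coordinate from each of the $\frac{k'}{r}$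 local groups, puncturing in $E$ yields a maximum distance separable $[k'+h,k']$ code. *)

From HB Require Import structures.
From mathcomp Require Import all_boot all_order all_algebra.
Set Implicit Arguments. Unset Strict Implicit. Unset Printing Implicit Defensive.
Import GRing.Theory.
Local Open Scope ring_scope.

Section Codes.
Variable F : fieldType.

Definition wt m (v : 'rV[F]_m) : nat := #|[set i | v 0 i != 0]|.

(* The linear code generated by G : 'M_(k, m) is {u *m G | u : 'rV_k}.
   It has minimum distance d: d is the least weight of a nonzero codeword,
   with the usual convention d = m + 1 for the zero code. *)
Definition has_min_dist k m (G : 'M[F]_(k, m)) (d : nat) : Prop :=
  (forall u : 'rV[F]_k, u *m G != 0 -> (d <= wt (u *m G))%N) /\
  ((exists u : 'rV[F]_k, u *m G != 0 /\ wt (u *m G) = d) \/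
   ((forall u : 'rV[F]_k, u *m G = 0) /\ d = m.+1)).

Definition is_MDS k m (G : 'M[F]_(k, m)) (k0 : nat) : Prop :=
  \rank G = k0 /\ has_min_dist G (m - k0 + 1).

(* The code of length n with generator
   G : 'M_(k, n) has local groups indexed by 'I_g; cg i = Some j means that
   coordinate i lies in local group j, cg i = None that it lies in no local
   group.  For every set E picking exactly one coordinate from each local
   group (E = image of e), puncturing in E (keeping the remaining m
   coordinates, listed by the injection f) must give an MDS [m, k] code. *)
Definition max_recoverable k n g m (G : 'M[F]_(k, n)) (cg : 'I_n -> option 'I_g)
  : Prop :=
  forall (e : 'I_g -> 'I_n) (f : 'I_m -> 'I_n),
    (forall j, cg (e j) = Some j) ->
    injective f ->
    (forall i, f i \notin codom e) ->
    is_MDS (colsub f G) k.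

(* Data symbols 'I_k, heavy parities with coefficient matrix A; the k + h
   data/heavy symbols are partitioned by grp into (k+h)/r groups of size r;
   local parity j = sum of the symbols of group j.  Coordinates are ordered
   as (data, heavy, local parities), so n = k + h + (k+h)/r. *)
Definition local_gen k h g (A : 'M[F]_(k, h)) (grp : 'I_(k + h) -> 'I_g)
  : 'M[F]_(k, k + h + g) :=
  let D := row_mx (1%:M : 'M[F]_k) A in
  row_mx D (\matrix_(i < k, j < g) \sum_(a | grp a == j) D i a).

Definition local_groups k h g (grp : 'I_(k + h) -> 'I_g) (i : 'I_(k + h + g))
  : option 'I_g :=
  match split i with inl a => Some (grp a) | inr j => Some j end.

Definition is_partition_r n g r (grp : 'I_n -> 'I_g) : Prop :=
  forall j : 'I_g, #|[set a | grp a == j]| = r.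

Definition exists_MR_local_code (k r h : nat) : Prop :=
  exists (A : 'M[F]_(k, h)) (grp : 'I_(k + h) -> 'I_((k + h) %/ r)),
    is_partition_r r grp /\
    @max_recoverable k _ _ (k + h) (local_gen A grp) (local_groups grp).

(* Data symbols 'I_k' partitioned by grp into k'/r groups of size r, one
   local parity per group (sum of its data symbols), and h heavy parities
   with coefficient matrix A.  Coordinates: (data, local, heavy). *)
Definition data_local_gen k g h (grp : 'I_k -> 'I_g) (A : 'M[F]_(k, h))
  : 'M[F]_(k, k + g + h) :=
  row_mx (row_mx (1%:M : 'M[F]_k) (\matrix_(i < k, j < g) (grp i == j)%:R)) A.

Definition data_local_groups k g h (grp : 'I_k -> 'I_g) (i : 'I_(k + g + h))
  : option 'I_g :=
  match split i with
  | inl b => Some (match split b with inl a => grp a | inr j => j end)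
  | inr _ => None
  end.

Definition exists_MR_data_local_code (k' r h : nat) : Prop :=
  exists (grp : 'I_k' -> 'I_(k' %/ r)) (A : 'M[F]_(k', h)),
    is_partition_r r grp /\
    @max_recoverable k' _ _ (k' + h) (data_local_gen grp A)
      (@data_local_groups k' (k' %/ r) h grp).

End Codes.

From mathcomp Require Import all_boot all_order all_algebra zify.
Set Implicit Arguments. Unset Strict Implicit. Unset Printing Implicit Defensive.
Import GRing.Theory.
Local Open Scope ring_scope.

(* The data-local code is a shortened code of the local one.  In an MR local
   code any k of the k + h data and heavy symbols form an information set.
   Reorder these symbols so that the k' symbols of the first k'/r local groups
   come first, take them together with k - k' further symbols as information
   set, and keep only the codewords vanishing on those k - k' symbols.  A
   transversal of the local groups of the shortened code extends to one of the
   original code by picking the local parity of every remaining group, and the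
   support of a codeword off the latter embeds into the support off the former,
   so the weight bound h + 1 carries over. *)

Lemma split_lshift m n (i : 'I_m) : split (lshift n i) = inl i.
Proof. exact: (unsplitK (inl i)). Qed.

Lemma split_rshift m n (j : 'I_n) : split (rshift m j) = inr j.
Proof. exact: (unsplitK (inr j)). Qed.

Lemma card_ord_prefix n p : (p <= n)%N -> #|[set i : 'I_n | (i < p)%N]| = p.
Proof.
move=> le_pn; have -> : [set i : 'I_n | (i < p)%N] = widen_ord le_pn @: setT.
  apply/setP=> i; rewrite !inE; apply/idP/imsetP => [lt_ip|[j _ ->]].
    by exists (Ordinal lt_ip) => //; apply: val_inj.
  by rewrite /= ltn_ord.
by rewrite card_imset ?cardsT ?card_ord // => a b /(congr1 val) /= /val_inj.
Qed.

Lemma exists_inj_onto_prefix n (X : {set 'I_n}) :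
  exists2 pi : 'I_n -> 'I_n, injective pi & forall i, (pi i \in X) = (i < #|X|)%N.
Proof.
pose s := enum X ++ enum (~: X).
have size_s : size s = n by rewrite size_cat -!cardE cardsC card_ord.
have uniq_s : uniq s.
  rewrite cat_uniq !enum_uniq /= andbT; apply/hasPn => x.
  by rewrite !mem_enum inE => ->.
exists (fun i => nth i s i) => [a b eq_ab | i].
  apply/val_inj/eqP; rewrite -(nth_uniq a _ _ uniq_s) ?size_s ?ltn_ord //.
  by rewrite eq_ab (set_nth_default b a) // size_s ltn_ord.
rewrite nth_cat -cardE; case: ltnP => [lt_iX | le_Xi].
  by rewrite -mem_enum mem_nth // -cardE.
have : nth i (enum (~: X)) (i - #|X|) \in enum (~: X).
  rewrite mem_nth // -cardE; have := cardsC X; rewrite card_ord.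
  by have := ltn_ord i; set c := #|~: X|; lia.
by rewrite mem_enum inE => /negbTE.
Qed.

Lemma card_partition_lt n g r (grp : 'I_n -> 'I_g) p :
  (p <= g)%N -> is_partition_r r grp -> #|[set a | (grp a < p)%N]| = (p * r)%N.
Proof.
move=> le_pg part.
rewrite -sum1_card (partition_big grp (fun j : 'I_g => (j < p)%N)); last first.
  by move=> a; rewrite inE.
rewrite (eq_bigr (fun _ => r)) => [|j lt_jp]; last first.
  rewrite sum1dep_card -(part j); apply: eq_card => a.
  by rewrite !inE; case: (grp a =P j) => [->|]; rewrite ?lt_jp ?andbF.
rewrite sum_nat_const -[in RHS](card_ord_prefix le_pg).
by congr (_ * _)%N; apply: eq_card => j; rewrite !inE.
Qed.

Section Codes.
Variable F : fieldType.

Definition punct_wt n g (e : 'I_g -> 'I_n) (w : 'rV[F]_n) : nat :=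
  #|[set y | (y \notin codom e) && (w 0 y != 0)]|.

Lemma wt0 m : wt (0 : 'rV[F]_m) = 0%N.
Proof.
by apply/eqP; rewrite cards_eq0; apply/eqP/setP => i; rewrite !inE mxE eqxx.
Qed.

Lemma exists_low_wt_codeword k m (G : 'M[F]_(k.+1, m)) :
  exists2 u : 'rV_k.+1, u != 0 & (wt (u *m G) <= m - k)%N.
Proof.
have le_pm : (minn k m <= m)%N by rewrite geq_minr.
pose H := colsub (widen_ord le_pm) G.
have : kermx H != 0.
  rewrite -mxrank_eq0 mxrank_ker -lt0n; have := rank_leq_col H.
  by have := geq_minl k m; set q := minn k m; lia.
rewrite -nz_row_eq0; set u := nz_row _ => nz_u.
have uH : u *m H = 0 by apply/sub_kermxP; apply: nz_row_sub.
exists u => //; rewrite /wt.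
have sub : [set i | (u *m G) 0 i != 0] \subset ~: [set i : 'I_m | (i < minn k m)%N].
  apply/subsetP => x; rewrite !inE; apply: contraNN => lt_x.
  have -> : x = widen_ord le_pm (Ordinal lt_x) by apply: val_inj.
  by move/rowP/(_ (Ordinal lt_x)): uH; rewrite mulmx_colsub !mxE => ->.
apply: (leq_trans (subset_leq_card sub)).
have := cardsC [set i : 'I_m | (i < minn k m)%N].
rewrite (card_ord_prefix le_pm) card_ord.
by set c := #|~: _|; lia.
Qed.

Lemma is_MDS_of_wt_lb k m (G : 'M[F]_(k, m)) :
  (forall u : 'rV_k, u != 0 -> (m - k + 1 <= wt (u *m G))%N) -> is_MDS G k.
Proof.
move=> wt_lb.
have nz_uG (u : 'rV_k) : u != 0 -> u *m G != 0.
  by move/wt_lb; apply: contraTneq => ->; rewrite wt0; lia.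
have free_G : row_free G.
  by apply: inj_row_free => v /eqP; apply: contraTeq; apply: nz_uG.
split; first exact/eqP.
split=> [u uG_nz | ].
  by apply: wt_lb; apply: contraNneq uG_nz => ->; rewrite mul0mx.
case: k G wt_lb nz_uG {free_G} => [|k] G wt_lb nz_uG.
  by right; split; [move=> u; apply/rowP => i; rewrite !mxE big_ord0 | lia].
left; have [u nz_u le_wt] := exists_low_wt_codeword G.
exists u; split; first exact: nz_uG.
by apply/eqP; rewrite eqn_leq wt_lb // andbT; apply: leq_trans le_wt _; lia.
Qed.

Lemma transversal_inj n g (cg : 'I_n -> option 'I_g) (e : 'I_g -> 'I_n) :
  (forall j, cg (e j) = Some j) -> injective e.
Proof. by move=> cg_e a b eq_ab; have := cg_e a; rewrite eq_ab cg_e => -[]. Qed.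

Lemma wt_colsub_punct n g m (e : 'I_g -> 'I_n) (f : 'I_m -> 'I_n) (w : 'rV[F]_n) :
  injective e -> injective f -> (forall i, f i \notin codom e) -> (g + m = n)%N ->
  wt (colsub f w) = punct_wt e w.
Proof.
move=> inj_e inj_f f_out n_eq.
have im_f : f @: setT = ~: [set y in codom e].
  apply/eqP; rewrite eqEcard; apply/andP; split.
    by apply/subsetP => y /imsetP [i _ ->]; rewrite !inE f_out.
  have := cardsC [set y in codom e]; rewrite cardsE card_codom // card_imset //.
  by rewrite cardsT !card_ord; set c := #|~: _|; lia.
rewrite /wt /punct_wt -(card_imset _ inj_f); apply: eq_card => y.
rewrite [RHS]inE (_ : (y \notin codom e) = (y \in f @: setT)); last first.
  by rewrite im_f !inE.
apply/imsetP/andP => [[i] | [/imsetP [i _ ->]]].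
  by rewrite inE mxE => nz_wi ->; rewrite imset_f.
by move=> nz_wi; exists i; rewrite // inE mxE.
Qed.

Lemma max_recoverable_punct_wt k n g m (G : 'M[F]_(k, n))
    (cg : 'I_n -> option 'I_g) (e : 'I_g -> 'I_n) :
  max_recoverable m G cg -> (forall j, cg (e j) = Some j) -> (g + m = n)%N ->
  forall v : 'rV_k, v != 0 -> (m - k + 1 <= punct_wt e (v *m G))%N.
Proof.
move=> MR cg_e n_eq v nz_v.
set C := ~: [set y in codom e].
have card_C : #|C| = m.
  have := cardsC [set y in codom e]; rewrite cardsE card_codom ?card_ord.
    by rewrite -/C; lia.
  exact: transversal_inj cg_e.
pose f (i : 'I_m) := enum_val (cast_ord (esym card_C) i).
have inj_f : injective f by move=> a b /enum_val_inj /cast_ord_inj.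
have f_out i : f i \notin codom e.
  by have := enum_valP (cast_ord (esym card_C) i); rewrite !inE.
have [rank_G [wt_lb _]] := MR e f cg_e inj_f f_out.
rewrite -(wt_colsub_punct _ (transversal_inj cg_e) inj_f) // -mulmx_colsub.
apply: wt_lb; apply: contra nz_v => /eqP uG0; apply/eqP.
apply: (row_free_inj (_ : row_free (colsub f G))); first by rewrite /row_free rank_G.
by rewrite /= uG0 mul0mx.
Qed.

Lemma max_recoverable_of_punct_wt k n g m (G : 'M[F]_(k, n))
    (cg : 'I_n -> option 'I_g) :
  (g + m = n)%N ->
  (forall e : 'I_g -> 'I_n, (forall j, cg (e j) = Some j) ->
     forall v : 'rV_k, v != 0 -> (m - k + 1 <= punct_wt e (v *m G))%N) ->
  max_recoverable m G cg.
Proof.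
move=> n_eq wt_lb e f cg_e inj_f f_out; apply: is_MDS_of_wt_lb => u nz_u.
by rewrite mulmx_colsub (wt_colsub_punct _ (transversal_inj cg_e)) // wt_lb.
Qed.

Lemma local_gen_data k h g (A : 'M[F]_(k, h)) (grp : 'I_(k + h) -> 'I_g)
    (v : 'rV_k) (a : 'I_(k + h)) :
  (v *m local_gen A grp) 0 (lshift g a) = (v *m row_mx 1%:M A) 0 a.
Proof. by rewrite mul_mx_row row_mxEl. Qed.

Lemma local_gen_parity k h g (A : 'M[F]_(k, h)) (grp : 'I_(k + h) -> 'I_g)
    (v : 'rV_k) (j : 'I_g) :
  (v *m local_gen A grp) 0 (rshift (k + h) j)
    = \sum_(a | grp a == j) (v *m row_mx 1%:M A) 0 a.
Proof.
rewrite mul_mx_row row_mxEr !mxE.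
under eq_bigr do rewrite mxE mulr_sumr.
by rewrite exchange_big; apply: eq_bigr => a _; rewrite mxE.
Qed.

Lemma max_recoverable_local_info_unitmx k h g (A : 'M[F]_(k, h))
    (grp : 'I_(k + h) -> 'I_g) (kappa : 'I_k -> 'I_(k + h)) :
  max_recoverable (k + h) (local_gen A grp) (local_groups grp) ->
  injective kappa -> colsub kappa (row_mx 1%:M A) \in unitmx.
Proof.
move=> MR inj_kappa; rewrite -row_free_unit; apply: inj_row_free => v.
rewrite mulmx_colsub => /rowP v_kappa0; apply/eqP; apply: contraT => nz_v.
have parity_cg j : local_groups grp (rshift (k + h) j) = Some j.
  by rewrite /local_groups split_rshift.
have := max_recoverable_punct_wt MR parity_cg (addnC _ _) nz_v.
rewrite addKn /punct_wt; set S := [set y | _].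
have : S \subset lshift g @: ~: (kappa @: setT).
  apply/subsetP => y; rewrite inE; case: (split_ordP y) => [a -> | j ->] /andP [out nz].
    rewrite imset_f // inE; apply/imsetP => -[j _ a_eq].
    move: nz; rewrite local_gen_data a_eq.
    by have := v_kappa0 j; rewrite !mxE => ->; rewrite eqxx.
  by rewrite codom_f in out.
move/subset_leq_card; rewrite card_imset; last exact: lshift_inj.
have := cardsC (kappa @: setT); rewrite card_imset // cardsT !card_ord.
by set c := #|~: _|; set s := #|S|; lia.
Qed.

Section Shortening.
Variables (k h g g' k' : nat) (A : 'M[F]_(k, h)) (grp : 'I_(k + h) -> 'I_g).
Hypothesis MR : max_recoverable (k + h) (local_gen A grp) (local_groups grp).
Hypotheses (le_k'k : (k' <= k)%N) (le_g'g : (g' <= g)%N).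
Variable pi : 'I_(k + h) -> 'I_(k + h).
Hypothesis inj_pi : injective pi.
Hypothesis pi_low : forall i, (grp (pi i) < g')%N = (i < k')%N.

Local Notation D := (row_mx (1%:M : 'M[F]_k) A).
Local Notation G := (local_gen A grp).
Local Notation widen_grp := (widen_ord le_g'g).

Definition info_pos (j : 'I_k) := pi (lshift h j).
Definition heavy_pos (l : 'I_h) := pi (rshift k l).
Definition data_pos (i : 'I_k') := info_pos (widen_ord le_k'k i).

Lemma data_pos_inj : injective data_pos.
Proof. by move=> a b /inj_pi /lshift_inj /(congr1 val) /= /val_inj. Qed.

Lemma data_pos_grp_lt i : (grp (data_pos i) < g')%N.
Proof. by rewrite pi_low /= ltn_ord. Qed.

Lemma data_posP a : (grp a < g')%N -> exists i, a = data_pos i.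
Proof.
move=> lt_a; have pi_t := f_invF inj_pi a; set t := invF inj_pi a in pi_t.
have lt_t : (t < k')%N by rewrite -pi_low pi_t.
by exists (Ordinal lt_t); rewrite -pi_t; congr pi; apply: val_inj.
Qed.

Definition short_grp (i : 'I_k') : 'I_g' := Ordinal (data_pos_grp_lt i).

Lemma widen_short_grp i : widen_grp (short_grp i) = grp (data_pos i).
Proof. exact: val_inj. Qed.

Lemma short_grp_class j :
  [set a | grp a == widen_grp j] = data_pos @: [set i | short_grp i == j].
Proof.
apply/setP => a; rewrite inE; apply/eqP/imsetP => [grp_a | [i]].
  have [i a_eq] : exists i, a = data_pos i by apply: data_posP; rewrite grp_a /= ltn_ord.
  by exists i => //; rewrite inE; apply/eqP/val_inj; rewrite /= -a_eq grp_a.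
by rewrite inE => /eqP <- ->; rewrite widen_short_grp.
Qed.

Lemma short_grp_partition r : is_partition_r r grp -> is_partition_r r short_grp.
Proof.
move=> part j; rewrite -(part (widen_grp j)) short_grp_class card_imset //.
exact: data_pos_inj.
Qed.

(* [u *m short_enc] is the message whose codeword reads [u] on the first k'
   information positions and 0 on the other k - k'. *)
Definition short_enc : 'M[F]_(k', k) :=
  (\matrix_(i, j) ((i : nat) == j)%:R) *m invmx (colsub info_pos D).

Definition short_heavy : 'M[F]_(k', h) := colsub heavy_pos (short_enc *m D).

Lemma short_enc_info (u : 'rV_k') j :
  (u *m short_enc *m D) 0 (info_pos j) = \sum_i u 0 i * ((i : nat) == j)%:R.
Proof.
have unit_M : colsub info_pos D \in unitmx.
  apply: max_recoverable_local_info_unitmx MR _ => a b.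
  by rewrite /info_pos => /inj_pi /lshift_inj.
rewrite (_ : _ 0 (info_pos j) = (u *m short_enc *m colsub info_pos D) 0 j); last first.
  by rewrite mulmx_colsub [RHS]mxE.
by rewrite /short_enc !mulmxA mulmxKV // !mxE; under eq_bigr do rewrite mxE.
Qed.

Lemma short_enc_data (u : 'rV_k') i : (u *m short_enc *m D) 0 (data_pos i) = u 0 i.
Proof.
rewrite short_enc_info (bigD1 i) //= eqxx mulr1 big1 ?addr0 // => l ne_li.
by rewrite (_ : _ == _ = false) ?mulr0 //; apply: contraNF ne_li => /eqP/val_inj ->.
Qed.

Lemma short_enc_info_high (u : 'rV_k') (j : 'I_k) :
  (k' <= j)%N -> (u *m short_enc *m D) 0 (info_pos j) = 0.
Proof.
move=> le_k'j; rewrite short_enc_info big1 // => i _.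
by case: eqP => [eq_ij | _]; rewrite ?mulr0 //; have := ltn_ord i; lia.
Qed.

Local Notation G' := (data_local_gen short_grp short_heavy).

Definition short_embed (x : 'I_(k' + g' + h)) : 'I_(k + h + g) :=
  match split x with
  | inl b => match split b with
             | inl i => lshift g (data_pos i)
             | inr j => rshift (k + h) (widen_grp j)
             end
  | inr l => lshift g (heavy_pos l)
  end.

Lemma short_embed_groups x j :
  data_local_groups short_grp x = Some j ->
  local_groups grp (short_embed x) = Some (widen_grp j).
Proof.
rewrite /data_local_groups /short_embed /local_groups.
case: (split x) => [b|l] //; case: (split b) => [i|j'] [<-].
  by rewrite split_lshift widen_short_grp.
by rewrite split_rshift.
Qed.

Lemma short_codeword (u : 'rV_k') x :
  (u *m G') 0 x = (u *m short_enc *m G) 0 (short_embed x).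
Proof.
rewrite /short_embed /data_local_gen mul_mx_row.
case: (split_ordP x) => [b -> | l ->].
  rewrite row_mxEl mul_mx_row; case: (split_ordP b) => [i -> | j ->].
    by rewrite row_mxEl mulmx1 local_gen_data short_enc_data.
  rewrite row_mxEr local_gen_parity mxE.
  rewrite (eq_bigl (mem (data_pos @: [set i | short_grp i == j]))) => [|a]; last first.
    by rewrite -short_grp_class /= inE.
  rewrite big_imset /=; last by move=> i1 i2 _ _ /data_pos_inj.
  rewrite [RHS]big_mkcond; apply: eq_bigr => i _; rewrite mxE inE short_enc_data.
  by case: eqP; rewrite ?mulr1 ?mulr0.
by rewrite row_mxEr local_gen_data mulmx_colsub [LHS]mxE mulmxA.
Qed.

Definition extend_transversal (e : 'I_g' -> 'I_(k' + g' + h)) (j : 'I_g)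
  : 'I_(k + h + g) :=
  if insub (val j) is Some j' then short_embed (e j') else rshift (k + h) j.

Lemma extend_transversal_widen e j :
  extend_transversal e (widen_grp j) = short_embed (e j).
Proof.
rewrite /extend_transversal; case: insubP => [j' _ /val_inj -> //|].
by rewrite /= ltn_ord.
Qed.

Lemma extend_transversal_high e (j : 'I_g) :
  (g' <= j)%N -> extend_transversal e j = rshift (k + h) j.
Proof.
by rewrite /extend_transversal; case: insubP => // j' lt_j _; rewrite leqNgt lt_j.
Qed.

Lemma extend_transversal_groups e :
  (forall j, data_local_groups short_grp (e j) = Some j) ->
  forall j, local_groups grp (extend_transversal e j) = Some j.
Proof.
move=> cg_e j; rewrite /extend_transversal; case: insubP => [j' _ val_j' | _].
  by rewrite (short_embed_groups (cg_e j')); congr Some; apply: val_inj.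
by rewrite /local_groups split_rshift.
Qed.

Lemma short_support_sub e (u : 'rV_k') :
  [set y | (y \notin codom (extend_transversal e))
           && ((u *m short_enc *m G) 0 y != 0)]
  \subset short_embed @: [set x | (x \notin codom e) && ((u *m G') 0 x != 0)].
Proof.
apply/subsetP => y; rewrite inE => /andP [out nz].
suff [x y_eq] : exists x, y = short_embed x.
  rewrite y_eq imset_f // inE short_codeword -y_eq nz andbT.
  apply: contra out => /codomP [j x_eq].
  by rewrite y_eq x_eq -extend_transversal_widen codom_f.
case: (split_ordP y) nz out => [a -> | j ->] nz out.
  have pi_t := f_invF inj_pi a; set t := invF inj_pi a in pi_t.
  case: (split_ordP t) pi_t nz => [j -> | l ->] <- nz.
    case: (ltnP j k') => [lt_jk' | le_k'j].
      exists (lshift h (lshift g' (Ordinal lt_jk'))).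
      rewrite /short_embed !split_lshift.
      by congr (lshift g (pi (lshift h _))); apply: val_inj.
    by move: nz; rewrite local_gen_data -[pi _]/(info_pos j) short_enc_info_high // eqxx.
  by exists (rshift (k' + g') l); rewrite /short_embed split_rshift.
case: (ltnP j g') => [lt_jg' | le_g'j].
  exists (lshift h (rshift k' (Ordinal lt_jg'))).
  by rewrite /short_embed split_lshift split_rshift; congr rshift; apply: val_inj.
by rewrite -(extend_transversal_high e le_g'j) codom_f in out.
Qed.

Lemma short_max_recoverable :
  max_recoverable (k' + h) G' (data_local_groups short_grp).
Proof.
apply: max_recoverable_of_punct_wt => [|e cg_e u nz_u]; first by rewrite addnCA addnA.
have nz_v : u *m short_enc != 0.
  apply: contra nz_u => /eqP v0; apply/eqP/rowP => i.
  by rewrite -short_enc_data v0 !mul0mx !mxE.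
have := max_recoverable_punct_wt MR (extend_transversal_groups cg_e) (addnC _ _) nz_v.
rewrite !addKn => /leq_trans; apply.
exact: leq_trans (subset_leq_card (short_support_sub _ _)) (leq_imset_card _ _).
Qed.
End Shortening.
End Codes.

Theorem lemma7 (F : finFieldType) (k r h : nat) :
  (0 < k)%N -> (0 < r)%N -> (0 < h)%N -> (r %| k + h)%N ->
  exists_MR_local_code F k r h ->
  exists_MR_data_local_code F (k %/ r * r) r h.
Proof.
move=> _ r_gt0 _ _ [A [grp [part MR]]].
have le_k'k : (k %/ r * r <= k)%N by rewrite leq_divM.
have le_g'g : (k %/ r * r %/ r <= (k + h) %/ r)%N.
  by rewrite leq_div2r // (leq_trans le_k'k) ?leq_addr.
set low := [set a | (grp a < k %/ r * r %/ r)%N].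
have [pi inj_pi pi_low] := exists_inj_onto_prefix low.
have card_low : #|low| = (k %/ r * r)%N by rewrite (card_partition_lt le_g'g part) mulnK.
have pi_low' i : (grp (pi i) < k %/ r * r %/ r)%N = (i < k %/ r * r)%N.
  by have := pi_low i; rewrite card_low inE.
exists (short_grp le_k'k pi_low'), (short_heavy (k %/ r * r) A pi).
split; first exact: short_grp_partition.
exact: short_max_recoverable.
Qed.
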